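(* Let $p$ be a prime, $q$ a power of $p$, and $m_0 \in \mathbb{N}$. Assume that for every $k \in \mathbb{N}$ and all $d_1,\dots,d_{m_0} \in \mathbb{N}$, the set $B(p^k; d_1,\dots,d_{m_0}; 1,\dots,1)$ is an $\overline{\mathbb{F}_p}(t)$-DML set over split torus. Let $c_1,\dots,c_{m_0+1} \in \mathbb{N}$. If $B(q; c_1,\dots,c_{m_0+1}; 1,\dots,1)$ is an $\overline{\mathbb{F}_p}(t)$-DML set over split torus, then $B(q; c_1,\dots,c_{m_0}, q c_{m_0+1}; 1,\dots,1)$ is also an $\overline{\mathbb{F}_p}(t)$-DML set over split torus.
   Context: For a power $q$ of $p$, $m \in \mathbb{N}$ and $c_1,\dots,c_m \in \mathbb{N}$, $B(q; c_1,\dots,c_m; 1,\dots,1) = \{ \sum_{j=1}^m c_j q^{n_j} : n_1,\dots,n_m \in \mathbb{N}_0\}$. For a field $K$ and a quasi-projective variety $X$ over $K$, a set $S \subseteq \mathbb{N}_0$ is a $K$-DML set over $X$ if there exist an endomorphism $\Phi$ of $X$ (a morphism $X \to X$ defined over $K$), a point $\alpha \in X(K)$ and a closed subvariety $V \subseteq X$ defined over $K$ (not necessarily irreducible) such that $S = \{ n \in \mathbb{N}_0 : \Phi^n(\alpha) \in V(K)\}$. $S$ is a $K$-DML set over split torus if it is a $K$-DML set over $\mathbb{G}_m^k$ for some $k \in \mathbb{N}$. *)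

From HB Require Import structures.
From mathcomp Require Import all_boot all_order all_algebra all_field.
From mathcomp Require Import mpoly.
Set Implicit Arguments. Unset Strict Implicit. Unset Printing Implicit Defensive.
Import GRing.Theory.
Local Open Scope ring_scope.

Definition Bset (q m : nat) (c : 'I_m -> nat) : nat -> Prop :=
  fun s => exists n : 'I_m -> nat, s = (\sum_(j < m) c j * q ^ n j)%N.

(* A Laurent polynomial in K[x_1^{+-1},...,x_k^{+-1}] is represented as
   a pair (P, e) standing for P / (x_1 * ... * x_k)^e. *)
Definition laurent (K : fieldType) (k : nat) := ({mpoly K[k]} * nat)%type.

Definition monoAll (K : fieldType) (k : nat) : {mpoly K[k]} :=
  \prod_(i < k) 'X_i.

Definition laurent_unit (K : fieldType) (k : nat) (f : laurent K k) : Prop :=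
  exists (Q : {mpoly K[k]}) (e' : nat), f.1 * Q = monoAll K k ^+ (f.2 + e').

Definition laurent_eval (K : fieldType) (k : nat) (f : laurent K k)
  (x : 'I_k -> K) : K :=
  f.1.@[x] / (\prod_(i < k) x i) ^+ f.2.

Definition torus_point (K : fieldType) (k : nat) (x : 'I_k -> K) : Prop :=
  forall i, x i != 0.

(* An endomorphism of G_m^k over K is given by k Laurent polynomials that are
   units of the coordinate ring K[x_1^{+-1},...,x_k^{+-1}];
   its action on K-points: *)
Definition endo_apply (K : fieldType) (k : nat) (Phi : 'I_k -> laurent K k)
  (x : 'I_k -> K) : 'I_k -> K :=
  fun i => laurent_eval (Phi i) x.

(* S is a K-DML set over G_m^k: closed subvarieties of G_m^k are zero loci
   (in G_m^k) of finitely many polynomials. *)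
Definition DML_over_torus (K : fieldType) (k : nat) (S : nat -> Prop) : Prop :=
  exists (Phi : 'I_k -> laurent K k),
    (forall i, laurent_unit (Phi i)) /\
    exists alpha : 'I_k -> K, torus_point alpha /\
    exists V : seq {mpoly K[k]},
      forall n : nat,
        S n <-> (forall g, g \in V -> g.@[iter n (endo_apply Phi) alpha] = 0).

Definition DML_split_torus (K : fieldType) (S : nat -> Prop) : Prop :=
  exists k : nat, (0 < k)%N /\ DML_over_torus K k S.

(* F is an algebraic closure of F_p: algebraically closed, of characteristic p,
   and algebraic over its prime subfield. *)
Definition algebraic_over_prime_field (F : fieldType) : Prop :=
  forall x : F, exists P : {poly F},
    P != 0 /\ (forall i, exists a : nat, P`_i = a%:R) /\ root P x.

Definition ratfun (F : fieldType) : fieldType := {fraction {poly F}}.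

From HB Require Import structures.
From mathcomp Require Import all_boot all_order all_algebra all_field.
From mathcomp Require Import mpoly.
From Stdlib Require Import FunctionalExtensionality.
Import GRing.Theory.
Local Open Scope ring_scope.

Set Implicit Arguments. Unset Strict Implicit. Unset Printing Implicit Defensive.

(* Split B' := B(q; c_1, ..., c_m, q c_(m+1)) according to whether one of the
   exponents of c_1, ..., c_m vanishes:
     B' = q B(q; c) U  U_(i <= m) (c_i + B(q; c_1, ..., q c_(m+1), ..., c_m)),
   where in the i-th set q c_(m+1) takes the place of c_i; these sets have m
   coefficients, hence are DML by hypothesis.  It remains to see that DML sets
   over split tori are closed under finite unions and under n |-> a n + b with
   a > 0.  For a union, run both systems on the product torus and multiply
   their equations.  For the affine map, use a delay line of b + a copies of
   the torus in which the last copy is fed with Phi applied to copy b: copy 0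
   then sees the orbit slowed down by a factor a and delayed by b steps, and
   one more coordinate, equal to 1 or to t (t <> 0, 1), marks the times
   N >= b with N = b mod a. *)

Section LaurentUnits.
Variable K : fieldType.

Lemma monoAll_eval k (x : 'I_k -> K) : (monoAll K k).@[x] = \prod_i x i.
Proof. by rewrite rmorph_prod; apply: eq_bigr => i _; apply: mevalXU. Qed.

Lemma prod_torus_neq0 k (x : 'I_k -> K) : torus_point x -> \prod_i x i != 0.
Proof.
by move=> x_neq0; rewrite prodf_seq_neq0; apply/allP => i _; apply: x_neq0.
Qed.

Lemma laurent_unit_eval_neq0 k (L : laurent K k) x :
  laurent_unit L -> torus_point x -> laurent_eval L x != 0.
Proof.
case: L => P e [Q [e' /= PQ]] x_neq0.
have prod_neq0 := prod_torus_neq0 x_neq0.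
have := congr1 (meval x) PQ; rewrite mevalM rmorphXn /= monoAll_eval => PQx.
rewrite /laurent_eval /= mulf_neq0 ?invr_neq0 ?expf_neq0 //.
apply: contra_eq_neq PQx => ->.
by rewrite mul0r eq_sym expf_neq0.
Qed.

Lemma meval_rename k1 k2 (s : 'I_k1 -> 'I_k2) (P : {mpoly K[k1]}) y :
  (P \mPo [tuple 'X_(s i) | i < k1]).@[y] = P.@[y \o s].
Proof.
by rewrite comp_mpoly_meval; apply: meval_eq => i; rewrite tnth_mktuple mevalXU.
Qed.

Lemma monoAll_rename k1 k2 (s : 'I_k1 -> 'I_k2) : injective s ->
  (monoAll K k1 \mPo [tuple 'X_(s i) | i < k1]) *
    \prod_(j | j \notin s @: setT) 'X_j = monoAll K k2.
Proof.
move=> s_inj; rewrite /monoAll [RHS](bigID (mem (s @: setT))) /=; congr (_ * _).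
rewrite rmorph_prod big_imset /=; last by move=> i j _ _; apply: s_inj.
apply: eq_big => [i|i _]; first by rewrite in_setT.
by rewrite comp_mpolyXU -tnth_nth tnth_mktuple.
Qed.

Lemma laurent_unit_rename k1 k2 (s : 'I_k1 -> 'I_k2) (L : laurent K k1) :
  injective s -> laurent_unit L ->
  exists2 L' : laurent K k2, laurent_unit L' &
    forall y, torus_point y -> laurent_eval L' y = laurent_eval L (y \o s).
Proof.
case: L => P e s_inj [Q [e' /= PQ]].
pose ren := comp_mpoly [tuple ('X_(s i) : {mpoly K[k2]}) | i < k1].
(* the variables missed by [s] divide the new denominator, so they are put
   in the numerator as well *)
pose R : {mpoly K[k2]} := \prod_(j | j \notin s @: setT) 'X_j.
have monoR := monoAll_rename s_inj; rewrite -/ren -/R in monoR.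
exists (ren P * R ^+ e, e).
  exists (ren Q * R ^+ e'), e'.
  by rewrite /= mulrACA -rmorphM PQ rmorphXn -exprD -exprMn monoR.
move=> y y_neq0; rewrite /laurent_eval /= mevalM rmorphXn /= !meval_rename.
have := congr1 (meval y) monoR.
rewrite mevalM !monoAll_eval meval_rename monoAll_eval => prodE.
have R_neq0 : R.@[y] != 0.
  apply: contraTneq (prod_torus_neq0 y_neq0) => R0.
  by rewrite -prodE R0 mulr0 eqxx.
by rewrite -prodE exprMn invfM mulrACA divff ?mulr1 // expf_neq0.
Qed.

End LaurentUnits.

Section FiniteIndex.
Variable K : fieldType.
Implicit Types I : finType.

Definition laurent_unit_fun I (f : (I -> K) -> K) :=
  exists2 L : laurent K #|I|, laurent_unit L &
    forall y, torus_point y -> laurent_eval L y = f (y \o enum_rank).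

Definition poly_fun I (f : (I -> K) -> K) :=
  exists P : {mpoly K[#|I|]}, forall y, P.@[y] = f (y \o enum_rank).

Lemma comp_enumK I (x : I -> K) : x \o enum_val \o enum_rank = x.
Proof. by apply: functional_extensionality => i /=; rewrite enum_rankK. Qed.

Lemma comp_enum_rename I1 I2 (s : I1 -> I2) (y : 'I_#|I2| -> K) :
  y \o (enum_rank \o s \o enum_val) \o enum_rank = y \o enum_rank \o s.
Proof. by apply: functional_extensionality => i /=; rewrite enum_rankK. Qed.

Lemma laurent_unit_fun_neq0 I f (x : I -> K) :
  laurent_unit_fun f -> (forall i, x i != 0) -> f x != 0.
Proof.
move=> [L L_unit fE] x_neq0; rewrite -(comp_enumK x) -fE => [|r].
  by apply: laurent_unit_eval_neq0 => // r; apply: x_neq0.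
exact: x_neq0.
Qed.

Lemma laurent_unit_fun_proj I (i : I) : laurent_unit_fun (fun x => x i).
Proof.
exists ('X_(enum_rank i), 0%N) => [|y _]; last first.
  by rewrite /laurent_eval /= expr0 invr1 mulr1 mevalXU.
exists (\prod_(j | j != enum_rank i) 'X_j), 1%N.
by rewrite /= add0n expr1 /monoAll [RHS](bigD1 (enum_rank i)).
Qed.

Lemma laurent_unit_fun_comp I1 I2 (s : I1 -> I2) f : injective s ->
  laurent_unit_fun f -> laurent_unit_fun (fun x : I2 -> K => f (x \o s)).
Proof.
move=> s_inj [L L_unit fE].
have ren_inj : injective (enum_rank \o s \o (enum_val : 'I_#|I1| -> I1)).
  by move=> r r' /= /enum_rank_inj /s_inj /enum_val_inj.
have [L' L'_unit L'E] := laurent_unit_rename ren_inj L_unit.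
exists L' => // y y_neq0; rewrite L'E // fE -?comp_enum_rename // => r.
exact: y_neq0.
Qed.

Lemma poly_fun_comp I1 I2 (s : I1 -> I2) f :
  poly_fun f -> poly_fun (fun x : I2 -> K => f (x \o s)).
Proof.
move=> [P fE].
exists (P \mPo [tuple 'X_((enum_rank \o s \o enum_val) r) | r < #|I1|]) => y.
by rewrite meval_rename fE comp_enum_rename.
Qed.

Lemma poly_fun_const I c : poly_fun (fun _ : I -> K => c).
Proof. by exists c%:MP => y; rewrite mevalC. Qed.

Lemma poly_fun_proj I (i : I) : poly_fun (fun x => x i).
Proof. by exists 'X_(enum_rank i) => y; rewrite mevalXU. Qed.

Lemma poly_funM I f g :
  poly_fun f -> poly_fun g -> poly_fun (fun x : I -> K => f x * g x).
Proof. by move=> [P fE] [Q gE]; exists (P * Q) => y; rewrite mevalM fE gE. Qed.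

Lemma poly_funB I f g :
  poly_fun f -> poly_fun g -> poly_fun (fun x : I -> K => f x - g x).
Proof. by move=> [P fE] [Q gE]; exists (P - Q) => y; rewrite mevalB fE gE. Qed.

End FiniteIndex.

Section DMLFin.
Variable K : fieldType.

(* A DML set over a torus whose coordinates are indexed by a finite type,
   identified with G_m^#|I| through [enum_rank]; sums and products of index
   types then build new systems from old ones. *)
Definition DML_fin (S : nat -> Prop) :=
  exists (I : finType) (Phi : (I -> K) -> I -> K) (a : I -> K)
         (J : finType) (V : J -> (I -> K) -> K),
  [/\ (0 < #|I|)%N, forall i, laurent_unit_fun (fun x => Phi x i),
      forall i, a i != 0, forall j, poly_fun (V j) &
      forall n, S n <-> forall j, V j (iter n Phi a) = 0].

Lemma eq_DML_fin (S S' : nat -> Prop) :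
  (forall n, S n <-> S' n) -> DML_fin S -> DML_fin S'.
Proof.
move=> SS' [I [Phi [a [J [V [I_gt0 Phi_unit a_neq0 V_poly SE]]]]]].
by exists I, Phi, a, J, V; split=> // n; rewrite -SS'.
Qed.

Lemma iter_laurent_unit_neq0 (I : finType) (Phi : (I -> K) -> I -> K) a n i :
  (forall i, laurent_unit_fun (fun x => Phi x i)) -> (forall i, a i != 0) ->
  iter n Phi a i != 0.
Proof.
move=> Phi_unit a_neq0; elim: n i => [|n IHn] i //=.
exact: laurent_unit_fun_neq0 (Phi_unit i) IHn.
Qed.

Lemma DML_fin_of_split_torus S : DML_split_torus K S -> DML_fin S.
Proof.
move=> [k [k_gt0 [Phi [Phi_unit [a [a_neq0 [V SE]]]]]]].
exists 'I_k, (endo_apply Phi), a, 'I_(size V),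
  (fun (j : 'I_(size V)) x => (V`_j).@[x]); split.
- by rewrite card_ord.
- move=> i; have [L L_unit LE] := laurent_unit_rename enum_rank_inj (Phi_unit i).
  by exists L.
- exact: a_neq0.
- move=> j; exists (V`_j \mPo [tuple 'X_(enum_rank i) | i < k]) => y.
  exact: meval_rename.
- move=> n; rewrite SE; split=> [V0 j | V0 g /(nthP 0) [j j_lt <-]].
    by apply: V0; rewrite mem_nth.
  exact: (V0 (Ordinal j_lt)).
Qed.

Lemma DML_split_torus_of_fin S : DML_fin S -> DML_split_torus K S.
Proof.
move=> [I [Phi [a [J [V [I_gt0 Phi_unit a_neq0 V_poly SE]]]]]].
have [L L_unit LE] := fin_all_exists2 Phi_unit.
have [P PE] := fin_all_exists V_poly.
exists #|I|; split=> //.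
exists (L \o enum_val); split=> [r|]; first exact: L_unit.
exists (a \o enum_val); split=> [r|]; first exact: a_neq0.
exists [seq P j | j <- enum J] => n.
have iterE :
  iter n (endo_apply (L \o enum_val)) (a \o enum_val) = iter n Phi a \o enum_val.
  elim: n {SE} => [//|n IHn]; apply: functional_extensionality => r.
  rewrite /= IHn /endo_apply /= LE ?comp_enumK // => r'.
  exact: iter_laurent_unit_neq0.
rewrite iterE SE; split=> [V0 g /mapP [j _ ->] | V0 j].
  by rewrite PE comp_enumK.
by rewrite -(comp_enumK (iter n Phi a)) -PE; apply: V0; rewrite map_f ?mem_enum.
Qed.

Lemma DML_finU S1 S2 :
  DML_fin S1 -> DML_fin S2 -> DML_fin (fun n => S1 n \/ S2 n).
Proof.
move=> [I1 [P1 [a1 [J1 [V1 [I1_gt0 P1_unit a1_neq0 V1_poly S1E]]]]]].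
move=> [I2 [P2 [a2 [J2 [V2 [_ P2_unit a2_neq0 V2_poly S2E]]]]]].
pose Phi (x : I1 + I2 -> K) (s : I1 + I2) : K :=
  match s with inl i => P1 (x \o inl) i | inr i => P2 (x \o inr) i end.
pose a (s : I1 + I2) : K := match s with inl i => a1 i | inr i => a2 i end.
have iterE n :
  iter n Phi a \o inl = iter n P1 a1 /\ iter n Phi a \o inr = iter n P2 a2.
  elim: n => [|n [IH1 IH2]]; first by split; apply: functional_extensionality.
  by split; apply: functional_extensionality => i; rewrite /= /Phi ?IH1 ?IH2.
exists (I1 + I2)%type, Phi, a, (J1 * J2)%type,
  (fun j x => V1 j.1 (x \o inl) * V2 j.2 (x \o inr)); split.
- by rewrite card_sum ltn_addr.
- case=> i.
    by apply: (laurent_unit_fun_comp (f := fun x => P1 x i)) => // ? ? [].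
  by apply: (laurent_unit_fun_comp (f := fun x => P2 x i)) => // ? ? [].
- by case.
- by case=> j1 j2; apply: poly_funM; apply: poly_fun_comp.
- move=> n; have [-> ->] := iterE n; rewrite S1E S2E; split.
    by case=> V0 [j1 j2]; rewrite /= V0 ?mul0r ?mulr0.
  move=> V0; case: (boolP [forall j1, V1 j1 (iter n P1 a1) == 0]).
    by move/forallP => V10; left => j1; apply/eqP.
  rewrite negb_forall => /existsP [j1 V1_neq0]; right => j2.
  by apply/eqP; move: (V0 (j1, j2)) => /eqP; rewrite mulf_eq0 (negbTE V1_neq0).
Qed.

Lemma DML_fin_bigU (T : finType) S0 (S : T -> nat -> Prop) :
  DML_fin S0 -> (forall i, DML_fin (S i)) ->
  DML_fin (fun n => S0 n \/ exists i, S i n).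
Proof.
move=> S0_DML S_DML.
suff: DML_fin (fun n => S0 n \/ exists2 i, i \in enum T & S i n).
  apply: eq_DML_fin => n; split=> [[S0n | [i _ Sin]] | [S0n | [i Sin]]].
  - by left.
  - by right; exists i.
  - by left.
  - by right; exists i; rewrite ?mem_enum.
elim: (enum T) => [|i s IHs].
  by apply: eq_DML_fin S0_DML => n; split=> [|[|[]]]; [left | |].
apply: eq_DML_fin (DML_finU IHs (S_DML i)) => n; split.
  case=> [[S0n | [j js Sj]] | Sin]; [by left | right | right].
    by exists j; rewrite // inE js orbT.
  by exists i; rewrite // inE eqxx.
case=> [S0n | [j]]; first by left; left.
rewrite inE => /orP [/eqP -> | js] Sj; [by right | by left; right; exists j].
Qed.

End DMLFin.

(* The delay line has positions 0, ..., b + a and period a.+1.  At time N,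
   position r holds [delay_seq (N + r)]: on the coordinates [Some i] the orbit
   of [x0] under [P], slowed down by a.+1 and delayed by b, and on the
   coordinate [None] the marker, equal to 1 exactly at the times b + k a.+1. *)
Section DelayLine.
Variables (K : fieldType) (I : finType) (P : (I -> K) -> I -> K) (x0 : I -> K).
Variables (w : K) (a b : nat).

Local Notation T := ('I_(b + a).+1 * option I)%type.

Definition delay_step (Y : T -> K) (p : T) : K :=
  let: (r, o) := p in
  if (r < b + a)%N then Y (inord r.+1, o) else
  if o is Some i then P (fun i' => Y (inord b, Some i')) i else Y (inord b, None).

Definition delay_init (p : T) : K :=
  if p.2 is Some i then x0 i else if p.1 == b :> nat then 1 else w.

Definition delay_seq (j : nat) (o : option I) : K :=
  if (j < b)%N then (if o is Some i then x0 i else w) else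
  if o is Some i then iter ((j - b) %/ a.+1)%N P x0 i
  else if ((j - b) %% a.+1 == 0)%N then 1 else w.

Lemma delay_init_seq r o : delay_init (r, o) = delay_seq r o.
Proof.
rewrite /delay_init /delay_seq /=; case: ltnP => [r_lt_b | b_le_r].
  by case: o => //; rewrite (ltn_eqF r_lt_b).
have r_lt : (r - b < a.+1)%N by rewrite ltn_subLR // addnS.
case: o => [i|]; first by rewrite divn_small.
by rewrite modn_small // subn_eq0 eqn_leq b_le_r andbT.
Qed.

Lemma delay_seq_period j o : (b <= j)%N ->
  delay_seq (j + a.+1) o =
  if o is Some i then P (fun i' => delay_seq j (Some i')) i else delay_seq j None.
Proof.
move=> b_le_j; rewrite /delay_seq ltnNge (leq_trans b_le_j (leq_addr _ _)).
rewrite ltnNge b_le_j /= -addnBAC //.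
case: o => [i|]; last by rewrite modnDr.
by rewrite divnDr ?dvdnn // divnn addn1.
Qed.

Lemma iter_delay_step N r o :
  iter N delay_step delay_init (r, o) = delay_seq (N + r) o.
Proof.
elim: N r o => [|N IHN] r o; first exact: delay_init_seq.
rewrite /= {1}/delay_step; case: ifP => [r_lt | r_ge].
  by rewrite IHN inordK // addnS addSn.
have -> : (N.+1 + r = N + b + a.+1)%N.
  move: (ltn_ord r) r_ge; rewrite ltnS leq_eqVlt => /orP [/eqP -> _ | -> //].
  by rewrite addSn addnA addnS.
rewrite delay_seq_period ?leq_addl //.
have b_lt : (b < (b + a).+1)%N by rewrite ltnS leq_addr.
case: o => [i|]; last by rewrite IHN inordK.
by congr (P _ i); apply: functional_extensionality => i'; rewrite IHN inordK.
Qed.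

Lemma delay_seq_marker N : w != 1 ->
  delay_seq N None = 1 <-> exists n, N = (a.+1 * n + b)%N.
Proof.
move=> w_neq1; rewrite /delay_seq; case: ltnP => [N_lt_b | b_le_N].
  split=> [w1 | [n NE]]; first by rewrite w1 eqxx in w_neq1.
  by rewrite NE ltnNge leq_addl in N_lt_b.
case: eqP => [mod0 | mod_neq0].
  split=> // _; exists ((N - b) %/ a.+1)%N.
  by rewrite mulnC divnK ?subnK // /dvdn mod0.
split=> [w1 | [n NE]]; first by rewrite w1 eqxx in w_neq1.
by rewrite NE addnK mulnC modnMl in mod_neq0.
Qed.

Lemma delay_seq_state n : delay_seq (a.+1 * n + b) \o Some = iter n P x0.
Proof.
apply: functional_extensionality => i.
by rewrite /= /delay_seq ltnNge leq_addl /= addnK mulKn.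
Qed.

Lemma delay_step_unit : (forall i, laurent_unit_fun (fun x => P x i)) ->
  forall p, laurent_unit_fun (fun Y => delay_step Y p).
Proof.
move=> P_unit [r o]; rewrite /delay_step; case: (r < b + a)%N.
  exact: laurent_unit_fun_proj.
case: o => [i|]; last exact: laurent_unit_fun_proj.
by apply: (laurent_unit_fun_comp (f := fun x => P x i)) => // i1 i2 [].
Qed.

Lemma delay_init_neq0 :
  w != 0 -> (forall i, x0 i != 0) -> forall p, delay_init p != 0.
Proof.
move=> w_neq0 x0_neq0 [r [i|]]; rewrite /delay_init /=; first exact: x0_neq0.
by case: ifP; rewrite ?oner_neq0.
Qed.

End DelayLine.

Lemma DML_fin_affine (K : fieldType) (w : K) S a b :
  w != 0 -> w != 1 -> (0 < a)%N ->
  DML_fin K S -> DML_fin K (fun N => exists n, S n /\ N = (a * n + b)%N).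
Proof.
move=> w_neq0 w_neq1; case: a => // a _.
move=> [I [P [x0 [J [V [I_gt0 P_unit x0_neq0 V_poly SE]]]]]].
pose T := ('I_(b + a).+1 * option I)%type.
exists T, (@delay_step _ _ P a b), (@delay_init _ _ x0 w a b), (option J),
  (fun jo Y => if jo is Some j then V j (fun i => Y (ord0, Some i))
               else Y (ord0, None) - 1); split.
- by rewrite card_prod card_ord card_option.
- exact: delay_step_unit.
- exact: delay_init_neq0.
- case=> [j|]; first exact: poly_fun_comp (V_poly j).
  by apply: poly_funB; [apply: poly_fun_proj | apply: poly_fun_const].
move=> N; set Y := iter N _ _.
have iterE o : Y (ord0, o) = delay_seq P x0 w a b N o.
  by rewrite /Y iter_delay_step addn0.
have stateE : (fun i => Y (ord0, Some i)) = delay_seq P x0 w a b N \o Some.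
  by apply: functional_extensionality => i; rewrite iterE.
have markerE := delay_seq_marker P x0 a b N w_neq1.
rewrite stateE; split=> [[n [Sn NE]] [j|] | V0].
- by rewrite NE delay_seq_state; move: Sn; rewrite SE.
- by rewrite iterE (proj2 markerE) ?subrr //; exists n.
have /markerE [n NE] : delay_seq P x0 w a b N None = 1.
  by apply/eqP; rewrite -subr_eq0 -iterE; apply/eqP; apply: (V0 None).
exists n; split=> //; rewrite SE => j.
by rewrite -(delay_seq_state P x0 w a b) -NE; apply: (V0 (Some j)).
Qed.

Lemma Bset_recr q m (c : 'I_m.+1 -> nat) (lo : 'I_m -> nat) hi :
  (forall j, c (widen_ord (leqnSn m) j) = lo j) -> c ord_max = hi ->
  forall N, Bset q c N <->
    exists (n : 'I_m -> nat) e, N = (\sum_(j < m) lo j * q ^ n j + hi * q ^ e)%N.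
Proof.
move=> loE hiE N; split=> [[n ->] | [n [e ->]]].
  exists (n \o widen_ord (leqnSn m)), (n ord_max).
  by rewrite big_ord_recr hiE; congr (_ + _); apply: eq_bigr => j _; rewrite loE.
exists (fun j => if unlift ord_max j is Some j' then n j' else e).
rewrite big_ord_recr /= unlift_none hiE; congr (_ + _); apply: eq_bigr => j _.
have -> : unlift ord_max (widen_ord (leqnSn m) j) = Some j.
  by rewrite -(liftK ord_max j); congr unlift; apply: ord_inj; rewrite lift_max.
by rewrite loE.
Qed.

Section ScaleLast.
Local Open Scope nat_scope.
Variables (q m : nat) (c : 'I_m.+1 -> nat).

Local Notation lo j := (c (widen_ord (leqnSn m) j)).

Definition scale_last (j : 'I_m.+1) : nat :=
  if j == ord_max then q * c j else c j.

Definition replace_by_last (i : 'I_m) (j : 'I_m) : nat :=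
  if j == i then q * c ord_max else lo j.

Lemma sum_replace_by_last i (n : 'I_m -> nat) :
  \sum_(j < m) replace_by_last i j * q ^ n j =
  q * c ord_max * q ^ n i + \sum_(j < m | j != i) lo j * q ^ n j.
Proof.
rewrite (bigD1 i) //= /replace_by_last eqxx; congr (_ + _).
by apply: eq_bigr => j /negbTE ->.
Qed.

Lemma Bset_scale_lastP N :
  Bset q scale_last N <->
  (exists n, Bset q c n /\ N = q * n) \/
  exists i, exists n, Bset q (replace_by_last i) n /\ N = n + lo i.
Proof.
have BcE := Bset_recr q (lo := fun j => lo j) (fun j => erefl) erefl.
have scaleE j : scale_last (widen_ord (leqnSn m) j) = lo j.
  by rewrite /scale_last -val_eqE /= ltn_eqF.
have scale_max : scale_last ord_max = q * c ord_max by rewrite /scale_last eqxx.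
have BsE := Bset_recr q scaleE scale_max.
rewrite BsE; split=> [[n [e ->]] | ].
  case: (pickP (fun j => n j == 0)) => [i /eqP ni0 | n_pos].
    right; exists i.
    exists (q * c ord_max * q ^ e + \sum_(j < m | j != i) lo j * q ^ n j); split.
      exists (fun j => if j == i then e else n j).
      rewrite sum_replace_by_last eqxx.
      by congr (_ + _); apply: eq_bigr => j /negbTE ->.
    by rewrite (bigD1 i) //= ni0 expn0 muln1 addnAC [RHS]addnC addnA.
  left; exists (\sum_(j < m) lo j * q ^ (n j).-1 + c ord_max * q ^ e); split.
    by apply/BcE; exists (fun j => (n j).-1), e.
  rewrite mulnDr big_distrr mulnA; congr (_ + _); apply: eq_bigr => j _ /=.
  by rewrite mulnCA -expnS prednK // lt0n n_pos.
case=> [[n0 [/BcE [n [e ->]] ->]] | [i [n0 [[n ->] ->]]]].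
  exists (fun j => (n j).+1), e; rewrite mulnDr big_distrr mulnA; congr (_ + _).
  by apply: eq_bigr => j _ /=; rewrite expnS mulnCA.
exists (fun j => if j == i then 0 else n j), (n i).
rewrite sum_replace_by_last [in RHS](bigD1 i) //= eqxx expn0 muln1.
rewrite addnC (addnC (q * _ * _)) addnA.
by congr (_ + _ + _); apply: eq_bigr => j /negbTE ->.
Qed.

End ScaleLast.

Theorem lemma3p4 (p : nat) (F : closedFieldType) (q m0 : nat)
  (c : 'I_m0.+1 -> nat) :
  prime p -> p \in [pchar F] -> algebraic_over_prime_field F ->
  (exists e : nat, (0 < e)%N /\ q = (p ^ e)%N) ->
  (0 < m0)%N ->
  (forall k : nat, (0 < k)%N -> forall d : 'I_m0 -> nat,
      (forall j, 0 < d j)%N ->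
      DML_split_torus (ratfun F) (Bset (p ^ k) d)) ->
  (forall j, 0 < c j)%N ->
  DML_split_torus (ratfun F) (Bset q c) ->
  DML_split_torus (ratfun F)
    (Bset q (fun j : 'I_m0.+1 => if j == ord_max then (q * c j)%N else c j)).
Proof.
move=> p_prime _ _ [e [e_gt0 qE]] _ DML_pk c_gt0 DML_c.
pose t : ratfun F := tofrac 'X.
have t_neq0 : t != 0 by rewrite tofrac_eq0 polyX_eq0.
have t_neq1 : t != 1.
  have size_neq : size ('X : {poly F}) != size (1 : {poly F}).
    by rewrite size_polyX size_poly1.
  by rewrite -tofrac1 tofrac_eq; apply: contra_neq size_neq => ->.
have q_gt0 : (0 < q)%N by rewrite qE expn_gt0 prime_gt0.
have replace_gt0 i j : (0 < replace_by_last q c i j)%N.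
  by rewrite /replace_by_last; case: eqP => _; rewrite ?muln_gt0 ?q_gt0 c_gt0.
apply: DML_split_torus_of_fin.
apply: eq_DML_fin (fun N => iff_sym (Bset_scale_lastP q c N)) _.
apply: DML_fin_bigU => [|i].
  apply: eq_DML_fin
    (DML_fin_affine 0 t_neq0 t_neq1 q_gt0 (DML_fin_of_split_torus DML_c)).
  by move=> N; split=> -[n [Bn ->]]; exists n; rewrite addn0.
have DML_i : DML_split_torus (ratfun F) (Bset q (replace_by_last q c i)).
  by rewrite {1}qE; apply: DML_pk.
apply: eq_DML_fin
  (DML_fin_affine _ t_neq0 t_neq1 (ltn0Sn 0) (DML_fin_of_split_torus DML_i)).
by move=> N; split=> -[n [Bn ->]]; exists n; rewrite mul1n.
Qed.
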